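(* Let $\theta^*=(\theta_1^*,\dots,\theta_M^* )$ be an optimal solution of OPT. Then for every pair of jobs $i,j\in\{1,\dots,M\}$ there exists a constant $c_{i,j}$ such that $$\frac{s'(\theta_i^*(t))}{s'(\theta_j^*(t))}=c_{i,j}$$ for all $t>0$ with $\theta_i^*(t)>0$ and $\theta_j^*(t)>0$.
   Context: Setting (problem OPT). There are $M$ jobs, all available at time $0$, with sizes $x_1\ge x_2\ge\cdots\ge x_M>0$ and weights $0<w_1\le w_2\le\cdots\le w_M$. A total resource $B>0$ is shared. The speedup function $s:[0,B]\to[0,\infty)$ satisfies: $s(0)=0$; $s$ is strictly increasing, strictly concave, differentiable, and $s'$ is continuous on $[0,B]$ (so $s'>0$ and $s'$ is strictly decreasing). A schedule consists of functions $\theta_i:(0,\infty)\to[0,B]$, $i=1,\dots,M$, each right-continuous in $t$, with $\sum_{i=1}^M\theta_i(t)\le B$ for all $t>0$. The service received by job $i$ on $[t_1,t_2]$ is $Q_i(t_1,t_2)=\int_{t_1}^{t_2}s(\theta_i(t))\,dt$. The completion time $T_i$ of job $i$ satisfies $Q_i(0,T_i)=x_i$, and $\theta_i(t)=0$ for $t>T_i$. OPT is the problem of choosing a schedule minimizing $J=\sum_{i=1}^M w_iT_i$. An optimal solution is a feasible schedule attaining the minimum; $T_i^*$ denotes its completion times. *)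

From Stdlib Require Import Reals Lra.
From Coquelicot Require Import Coquelicot.
Open Scope R_scope.

(* rsum n f = f 0 + ... + f (n-1)  (jobs are indexed 0 .. M-1) *)
Fixpoint rsum (n : nat) (f : nat -> R) : R :=
  match n with O => 0 | S k => rsum k f + f k end.

(* Hypotheses on the speedup function s on [0,B], with ds playing s'. *)
Definition speedup_ok (B : R) (s ds : R -> R) : Prop :=
  s 0 = 0 /\
  (forall a b, 0 <= a -> a < b -> b <= B -> s a < s b) /\
  (forall a b l, 0 <= a <= B -> 0 <= b <= B -> a <> b -> 0 < l < 1 ->
      l * s a + (1 - l) * s b < s (l * a + (1 - l) * b)) /\
  (forall a, 0 <= a <= B ->
      filterlim (fun y => (s y - s a) / (y - a))
        (within (fun y => 0 <= y <= B /\ y <> a) (locally a)) (locally (ds a))) /\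
  (forall a, 0 <= a <= B ->
      filterlim ds (within (fun y => 0 <= y <= B) (locally a)) (locally (ds a))) /\
  (forall a, 0 <= a <= B -> 0 < ds a).

Definition feasible (M : nat) (B : R) (s : R -> R) (x : nat -> R)
    (th : nat -> R -> R) (T : nat -> R) : Prop :=
  (forall i t, (i < M)%nat -> 0 < t -> 0 <= th i t <= B) /\
  (forall i t, (i < M)%nat -> 0 < t ->
      filterlim (th i) (at_right t) (locally (th i t))) /\
  (forall t, 0 < t -> rsum M (fun i => th i t) <= B) /\
  (forall i, (i < M)%nat ->
      0 <= T i /\
      is_RInt (fun t => s (th i t)) 0 (T i) (x i) /\
      (forall t, T i < t -> th i t = 0)).

Definition cost (M : nat) (w : nat -> R) (T : nat -> R) : R :=
  rsum M (fun i => w i * T i).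

Definition optimal (M : nat) (B : R) (s : R -> R) (x w : nat -> R)
    (th : nat -> R -> R) (T : nat -> R) : Prop :=
  feasible M B s x th T /\
  (forall th' T', feasible M B s x th' T' -> cost M w T <= cost M w T').

From Stdlib Require Import Reals Lra Lia Classical IndefiniteDescription.
From Coquelicot Require Import Coquelicot.
Open Scope R_scope.

(* Suppose that at two instants t1 < t2 where jobs i and j both run, the marginal rates
   were out of proportion: s'(a) s'(b2) > s'(a2) s'(b) with a, b the allocations of i, j
   at t1 and a2, b2 those at t2.  Then on a short window after t1 move a little resource
   from j to i, and on a short window after t2 move a suitably proportional amount back
   from i to j.  To first order in the size of the move both jobs gain service, and by
   right-continuity the allocations stay close to a, b, a2, b2 on short enough windows,
   so the gain survives.  Stopping every job as soon as it has received its size then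
   strictly decreases the weighted completion time, contradicting optimality. *)

Lemma at_right_0_le (c : R) : 0 < c -> at_right 0 (fun h => 0 < h <= c).
Proof.
  intros Hc. exists (mkposreal c Hc). intros y Hy Hpos.
  apply Rabs_lt_between' in Hy. simpl in Hy. lra.
Qed.

Lemma at_right_0_mul_lt (C r : R) : 0 < C -> 0 < r -> at_right 0 (fun e => 0 < e /\ C * e < r).
Proof.
  intros HC Hr. apply filter_imp with (fun e => 0 < e <= r / (2 * C)).
  - intros e He. split; [lra|].
    apply Rle_lt_trans with (C * (r / (2 * C))); [apply Rmult_le_compat_l; lra|].
    replace (C * (r / (2 * C))) with (r / 2) by (field; lra). lra.
  - apply at_right_0_le. apply Rdiv_lt_0_compat; lra.
Qed.

Lemma at_right_interval (t : R) (P : R -> Prop) (d : R) :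
  0 < d -> (forall y, t < y < t + d -> P y) -> at_right t P.
Proof.
  intros Hd HP. exists (mkposreal d Hd). intros y Hy Hty.
  apply Rabs_lt_between' in Hy. apply HP. simpl in Hy. lra.
Qed.

Lemma right_continuous_ext (f g : R -> R) (t d : R) :
  0 < d -> (forall y, t <= y < t + d -> f y = g y) ->
  filterlim f (at_right t) (locally (f t)) ->
  filterlim g (at_right t) (locally (g t)).
Proof.
  intros Hd Hfg Hf. replace (g t) with (f t) by (apply Hfg; lra).
  apply filterlim_ext_loc with f; [|exact Hf].
  apply at_right_interval with d; [exact Hd|]. intros y Hy. apply Hfg; lra.
Qed.

Lemma right_continuous_eventually (f : R -> R) (t g : R) :
  filterlim f (at_right t) (locally (f t)) -> 0 < g ->
  at_right 0 (fun h => forall y, t <= y < t + h -> f t - g < f y < f t + g).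
Proof.
  intros Hf Hg.
  destruct (proj1 (filterlim_locally _ _) Hf (mkposreal g Hg)) as [e He].
  exists e. intros h Hh Hpos y Hy. apply Rabs_lt_between'.
  destruct (Req_dec y t) as [->|Hne].
  - rewrite Rminus_diag, Rabs_R0. exact Hg.
  - apply (He y).
    + apply Rabs_lt_between'. apply Rabs_lt_between' in Hh. simpl in *. lra.
    + lra.
Qed.

Lemma right_continuous_pos_lt (f : R -> R) (t T : R) :
  0 < f t -> filterlim f (at_right t) (locally (f t)) ->
  (forall y, T < y -> f y = 0) -> t < T.
Proof.
  intros Hpos Hf Hzero. destruct (Rlt_le_dec t T) as [|HTt]; [assumption|exfalso].
  destruct (filter_ex (F := at_right 0) _
    (filter_and (F := at_right 0) _ _ (at_right_0_le 1 Rlt_0_1)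
       (right_continuous_eventually f t (f t / 2) Hf ltac:(lra)))) as [h [Hh Hnear]].
  specialize (Hnear (t + h / 2) ltac:(lra)). rewrite (Hzero (t + h / 2)) in Hnear by lra. lra.
Qed.

Lemma rsum_le (n : nat) (f g : nat -> R) :
  (forall k, (k < n)%nat -> f k <= g k) -> rsum n f <= rsum n g.
Proof.
  induction n as [|n IH]; simpl; intros Hfg; [lra|].
  assert (f n <= g n) by (apply Hfg; lia).
  assert (rsum n f <= rsum n g) by (apply IH; intros; apply Hfg; lia). lra.
Qed.

Lemma rsum_lt (n : nat) (f g : nat -> R) (k0 : nat) :
  (forall k, (k < n)%nat -> f k <= g k) -> (k0 < n)%nat -> f k0 < g k0 ->
  rsum n f < rsum n g.
Proof.
  induction n as [|n IH]; simpl; intros Hfg Hk0 Hlt; [lia|].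
  destruct (Nat.eq_dec k0 n) as [->|Hne].
  - assert (rsum n f <= rsum n g) by (apply rsum_le; intros; apply Hfg; lia). lra.
  - assert (f n <= g n) by (apply Hfg; lia).
    assert (rsum n f < rsum n g) by (apply IH; [intros; apply Hfg; lia|lia|exact Hlt]). lra.
Qed.

Lemma rsum_nonneg (n : nat) (f : nat -> R) :
  (forall k, (k < n)%nat -> 0 <= f k) -> 0 <= rsum n f.
Proof.
  induction n as [|n IH]; simpl; intros Hf; [lra|].
  assert (0 <= f n) by (apply Hf; lia).
  assert (0 <= rsum n f) by (apply IH; intros; apply Hf; lia). lra.
Qed.

Lemma rsum_sub_pair (n : nat) (f g : nat -> R) (i j : nat) :
  i <> j -> (i < n)%nat -> (j < n)%nat ->
  (forall k, k <> i -> k <> j -> f k = g k) ->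
  rsum n f - rsum n g = (f i - g i) + (f j - g j).
Proof.
  intros Hij Hi Hj Hfg.
  enough (E : forall m, rsum m f - rsum m g =
    (if Compare_dec.lt_dec i m then f i - g i else 0) +
    (if Compare_dec.lt_dec j m then f j - g j else 0)).
  { rewrite E. destruct (Compare_dec.lt_dec i n); destruct (Compare_dec.lt_dec j n); lia || lra. }
  induction m as [|m IH]; simpl; [lra|].
  destruct (Compare_dec.lt_dec i m); destruct (Compare_dec.lt_dec i (S m));
  destruct (Compare_dec.lt_dec j m); destruct (Compare_dec.lt_dec j (S m)); try lia;
  try (assert (i = m) by lia); try (assert (j = m) by lia); subst; try lia;
  try (rewrite (Hfg m) by lia); lra.
Qed.

Lemma rsum_ge_pair (n : nat) (f : nat -> R) (i j : nat) :
  i <> j -> (i < n)%nat -> (j < n)%nat -> (forall k, (k < n)%nat -> 0 <= f k) ->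
  f i + f j <= rsum n f.
Proof.
  intros Hij Hi Hj Hf.
  set (g := fun k => if Nat.eq_dec k i then 0 else if Nat.eq_dec k j then 0 else f k).
  assert (Hg : 0 <= rsum n g).
  { apply rsum_nonneg. intros k Hk. unfold g.
    destruct (Nat.eq_dec k i); [lra|]. destruct (Nat.eq_dec k j); [lra|]. auto. }
  assert (Hgi : g i = 0) by (unfold g; destruct (Nat.eq_dec i i); [reflexivity|lia]).
  assert (Hgj : g j = 0).
  { unfold g. destruct (Nat.eq_dec j i); [lia|]. destruct (Nat.eq_dec j j); [reflexivity|lia]. }
  assert (E : rsum n f - rsum n g = (f i - g i) + (f j - g j)).
  { apply rsum_sub_pair; auto. intros k Hki Hkj. unfold g.
    destruct (Nat.eq_dec k i); [lia|]. destruct (Nat.eq_dec k j); [lia|]. reflexivity. }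
  lra.
Qed.

Lemma ex_RInt_sub (g : R -> R) (a b c d : R) :
  a <= c -> c <= d -> d <= b -> ex_RInt g a b -> ex_RInt g c d.
Proof.
  intros Hac Hcd Hdb Hg.
  apply (ex_RInt_Chasles_2 g a c d); [lra|].
  apply (ex_RInt_Chasles_1 g a d b); [lra|exact Hg].
Qed.

Lemma RInt_le_const (g : R -> R) (a b K : R) : a <= b -> ex_RInt g a b ->
  (forall t, a < t < b -> g t <= K) -> RInt g a b <= (b - a) * K.
Proof.
  intros Hab Hg HK. replace ((b - a) * K) with (RInt (fun _ => K) a b)
    by (rewrite RInt_const; reflexivity).
  apply RInt_le; auto. apply ex_RInt_const.
Qed.

Lemma RInt_0_lipschitz (g : R -> R) (T K : R) :
  ex_RInt g 0 T -> (forall t, 0 <= t <= T -> Rabs (g t) <= K) ->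
  forall p q, 0 <= p -> p <= q -> q <= T ->
  Rabs (RInt g 0 q - RInt g 0 p) <= (q - p) * K.
Proof.
  intros Hg HK p q Hp Hpq HqT.
  assert (Ep : ex_RInt g 0 p) by (apply ex_RInt_sub with 0 T; auto; lra).
  assert (Epq : ex_RInt g p q) by (apply ex_RInt_sub with 0 T; auto; lra).
  assert (E : RInt g 0 q = RInt g 0 p + RInt g p q :> R)
    by (rewrite <- (RInt_Chasles g 0 p q Ep Epq); reflexivity).
  rewrite E. unfold Rminus. rewrite Rplus_comm, <- Rplus_assoc, Rplus_opp_l, Rplus_0_l.
  apply (norm_RInt_le_const (V := R_NormedModule) g p q _ K Hpq).
  - intros y Hy. apply HK. lra.
  - exact (RInt_correct g p q Epq).
Qed.

Lemma lipschitz_continuity (G : R -> R) (K : R) : 0 <= K ->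
  (forall a b, a <= b -> Rabs (G b - G a) <= (b - a) * K) -> continuity G.
Proof.
  intros HK HG t0 eps Heps. exists (eps / (K + 1)). split; [apply Rdiv_lt_0_compat; lra|].
  intros t [_ Ht]. simpl in *; unfold R_dist in *.
  assert (Hsmall : K * (eps / (K + 1)) < eps).
  { apply Rmult_lt_reg_r with (K + 1); [lra|].
    replace (K * (eps / (K + 1)) * (K + 1)) with (K * eps) by (field; lra). nra. }
  destruct (Rle_dec t0 t).
  - pose proof (HG t0 t r). rewrite Rabs_right in Ht by lra. nra.
  - pose proof (HG t t0 ltac:(lra)). rewrite Rabs_left in Ht by lra.
    rewrite Rabs_minus_sym. nra.
Qed.

(* The primitive is Lipschitz on [0, T]; clamping its argument to [0, T] makes it
   a globally continuous function to which [IVT_gen] applies. *)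
Lemma RInt_intermediate_value (g : R -> R) (T y : R) :
  0 <= T -> ex_RInt g 0 T -> 0 <= y <= RInt g 0 T ->
  exists T', 0 <= T' <= T /\ is_RInt g 0 T' y /\ (y < RInt g 0 T -> T' < T).
Proof.
  intros HT Hg Hy.
  destruct (ex_RInt_ub g 0 T Hg) as [K HK].
  rewrite Rmin_left, Rmax_right in HK by lra. change norm with Rabs in HK; simpl in HK.
  assert (HK0 : 0 <= K) by (pose proof (HK 0 ltac:(lra)); pose proof (Rabs_pos (g 0)); lra).
  assert (Lip := RInt_0_lipschitz g T K Hg HK).
  set (cl := fun t => Rmax 0 (Rmin T t)).
  assert (Hcl : forall t, 0 <= t <= T -> cl t = t).
  { intros t Ht. unfold cl, Rmax, Rmin. destruct (Rle_dec T t); destruct (Rle_dec 0 _); lra. }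
  assert (Hcl_mono : forall a b, a <= b ->
            0 <= cl a /\ cl a <= cl b /\ cl b <= T /\ cl b - cl a <= b - a).
  { intros a b Hab. unfold cl, Rmax, Rmin.
    destruct (Rle_dec T a); destruct (Rle_dec T b); destruct (Rle_dec 0 a);
    destruct (Rle_dec 0 b); destruct (Rle_dec 0 T); lra. }
  set (G := fun t => RInt g 0 (cl t)).
  assert (HG : forall a b, a <= b -> Rabs (G b - G a) <= (b - a) * K).
  { intros a b Hab. destruct (Hcl_mono a b Hab) as [H0 [H1 [H2 H3]]].
    pose proof (Lip (cl a) (cl b) H0 H1 H2). unfold G. nra. }
  assert (Gcont := lipschitz_continuity G K HK0 HG).
  assert (G0 : G 0 = 0) by (unfold G; rewrite Hcl by lra; rewrite RInt_point; reflexivity).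
  assert (GT : G T = RInt g 0 T) by (unfold G; rewrite Hcl by lra; reflexivity).
  destruct (IVT_gen G 0 T y Gcont) as [T' [HT' GT']].
  { rewrite G0, GT, Rmin_left, Rmax_right by lra. lra. }
  rewrite Rmin_left, Rmax_right in HT' by lra.
  exists T'. split; [exact HT'|split].
  - rewrite <- GT'. unfold G. rewrite Hcl by lra.
    apply (RInt_correct g 0 T'). apply ex_RInt_sub with 0 T; auto; lra.
  - intros Hlt. destruct (Req_dec T' T) as [->|]; [|lra]. rewrite GT in GT'. lra.
Qed.

(** * Overwriting an allocation on a time window *)

Definition patch (f : R -> R) (u h c : R) (t : R) : R :=
  if Rle_dec u t then (if Rlt_dec t (u + h) then c else f t) else f t.

Lemma patch_in (f : R -> R) (u h c t : R) : u <= t < u + h -> patch f u h c t = c.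
Proof.
  intros Ht. unfold patch. destruct (Rle_dec u t); [|lra].
  destruct (Rlt_dec t (u + h)); [reflexivity|lra].
Qed.

Lemma patch_out (f : R -> R) (u h c t : R) :
  t < u \/ u + h <= t -> patch f u h c t = f t.
Proof.
  intros Ht. unfold patch. destruct (Rle_dec u t); [|reflexivity].
  destruct (Rlt_dec t (u + h)); [lra|reflexivity].
Qed.

Lemma patch_cases (f : R -> R) (u h c t : R) :
  patch f u h c t = c \/ patch f u h c t = f t.
Proof.
  destruct (Rlt_le_dec t u); [right; apply patch_out; lra|].
  destruct (Rlt_le_dec t (u + h)); [left; apply patch_in | right; apply patch_out]; lra.
Qed.

Lemma patch_right_continuous (f : R -> R) (u h c : R) : 0 < h ->
  (forall t, 0 < t -> filterlim f (at_right t) (locally (f t))) ->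
  forall t, 0 < t -> filterlim (patch f u h c) (at_right t) (locally (patch f u h c t)).
Proof.
  intros Hh Hf t Ht.
  destruct (Rlt_le_dec t u); [|destruct (Rlt_le_dec t (u + h))].
  - apply right_continuous_ext with f (u - t); [lra| |auto].
    intros y Hy. symmetry. apply patch_out. lra.
  - apply right_continuous_ext with (fun _ => c) (u + h - t); [lra| |apply filterlim_const].
    intros y Hy. symmetry. apply patch_in. lra.
  - apply right_continuous_ext with f 1; [lra| |auto].
    intros y Hy. symmetry. apply patch_out. lra.
Qed.

Lemma RInt_patch (g f : R -> R) (u h c T : R) :
  0 <= u -> 0 < h -> u + h <= T -> ex_RInt (fun t => g (f t)) 0 T ->
  ex_RInt (fun t => g (patch f u h c t)) 0 T /\
  RInt (fun t => g (patch f u h c t)) 0 T =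
   RInt (fun t => g (f t)) 0 T - RInt (fun t => g (f t)) u (u + h) + h * g c.
Proof.
  intros Hu Hh HT Hex.
  set (F := fun t => g (f t)). set (G := fun t => g (patch f u h c t)).
  assert (E1 : ex_RInt F 0 u) by (apply ex_RInt_sub with 0 T; auto; lra).
  assert (E2 : ex_RInt F u (u + h)) by (apply ex_RInt_sub with 0 T; auto; lra).
  assert (E3 : ex_RInt F (u + h) T) by (apply ex_RInt_sub with 0 T; auto; lra).
  assert (Htot : RInt F 0 T = RInt F 0 u + RInt F u (u + h) + RInt F (u + h) T :> R).
  { rewrite <- (RInt_Chasles F 0 u T); auto.
    - rewrite <- (RInt_Chasles F u (u + h) T); auto. change plus with Rplus. ring.
    - apply ex_RInt_Chasles with (u + h); auto. }
  assert (I1 : is_RInt G 0 u (RInt F 0 u)).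
  { apply is_RInt_ext with F; [|exact (RInt_correct F _ _ E1)].
    rewrite Rmin_left, Rmax_right by lra. intros y Hy. unfold F, G.
    rewrite patch_out by lra. reflexivity. }
  assert (I2 : is_RInt G u (u + h) (h * g c)).
  { apply is_RInt_ext with (fun _ => g c).
    - rewrite Rmin_left, Rmax_right by lra. intros y Hy. unfold G.
      rewrite patch_in by lra. reflexivity.
    - replace (h * g c) with (scal (u + h - u) (g c)) by (cbn; unfold mult; simpl; ring).
      exact (is_RInt_const (V := R_NormedModule) u (u + h) (g c)). }
  assert (I3 : is_RInt G (u + h) T (RInt F (u + h) T)).
  { apply is_RInt_ext with F; [|exact (RInt_correct F _ _ E3)].
    rewrite Rmin_left, Rmax_right by lra. intros y Hy. unfold F, G.
    rewrite patch_out by lra. reflexivity. }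
  assert (I := is_RInt_Chasles G 0 (u + h) T _ _ (is_RInt_Chasles G 0 u (u + h) _ _ I1 I2) I3).
  split; [eexists; exact I|].
  rewrite (is_RInt_unique _ _ _ _ I). change plus with Rplus. simpl. rewrite Htot. ring.
Qed.

Lemma RInt_patch_ge (B : R) (g f : R -> R) (u h c p T : R) :
  (forall a b, 0 <= a -> a <= b -> b <= B -> g a <= g b) ->
  0 <= u -> 0 < h -> u + h <= T -> ex_RInt (fun t => g (f t)) 0 T ->
  (forall t, u < t < u + h -> 0 <= f t <= p) -> p <= B ->
  ex_RInt (fun t => g (patch f u h c t)) 0 T /\
  RInt (fun t => g (f t)) 0 T + h * (g c - g p) <= RInt (fun t => g (patch f u h c t)) 0 T.
Proof.
  intros Hmono Hu Hh HT Hex Hf Hp.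
  destruct (RInt_patch g f u h c T Hu Hh HT Hex) as [Hex' E].
  split; [exact Hex'|]. rewrite E.
  assert (U : RInt (fun t => g (f t)) u (u + h) <= (u + h - u) * g p).
  { apply RInt_le_const; [lra|apply ex_RInt_sub with 0 T; auto; lra|].
    intros t Ht. destruct (Hf t Ht). apply Hmono; lra. }
  replace (u + h - u) with h in U by ring. lra.
Qed.

Lemma RInt_patch2_ge (B : R) (g f : R -> R) (t1 t2 h c1 c2 p1 p2 T : R) :
  (forall a b, 0 <= a -> a <= b -> b <= B -> g a <= g b) ->
  0 < t1 -> 0 < h -> t1 + h <= t2 -> t2 + h <= T ->
  ex_RInt (fun t => g (f t)) 0 T ->
  (forall t, t1 < t < t1 + h -> 0 <= f t <= p1) -> p1 <= B ->
  (forall t, t2 < t < t2 + h -> 0 <= f t <= p2) -> p2 <= B ->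
  ex_RInt (fun t => g (patch (patch f t1 h c1) t2 h c2 t)) 0 T /\
  RInt (fun t => g (f t)) 0 T + h * (g c1 - g p1 + g c2 - g p2) <=
  RInt (fun t => g (patch (patch f t1 h c1) t2 h c2 t)) 0 T.
Proof.
  intros Hmono Ht1 Hh H12 HT Hex Hp1 HB1 Hp2 HB2.
  destruct (RInt_patch_ge B g f t1 h c1 p1 T Hmono ltac:(lra) Hh ltac:(lra) Hex Hp1 HB1)
    as [Hex1 Hge1].
  destruct (RInt_patch_ge B g (patch f t1 h c1) t2 h c2 p2 T Hmono ltac:(lra) Hh HT Hex1)
    as [Hex2 Hge2]; [|exact HB2|].
  - intros t Ht. rewrite patch_out by lra. auto.
  - split; [exact Hex2|lra].
Qed.

Lemma patch2_preserves (P : R -> Prop) (f : R -> R) (t1 t2 h c1 c2 t : R) :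
  P (f t) -> P c1 -> P c2 -> P (patch (patch f t1 h c1) t2 h c2 t).
Proof.
  intros Hf H1 H2.
  destruct (patch_cases (patch f t1 h c1) t2 h c2 t) as [-> | ->]; [exact H2|].
  destruct (patch_cases f t1 h c1 t) as [-> | ->]; assumption.
Qed.

Lemma patch2_sum_le (f g : R -> R) (t1 t2 h c1 c2 d1 d2 : R) :
  t1 + h <= t2 ->
  (forall t, t1 <= t < t1 + h -> c1 + d1 <= f t + g t) ->
  (forall t, t2 <= t < t2 + h -> c2 + d2 <= f t + g t) ->
  forall t, patch (patch f t1 h c1) t2 h c2 t + patch (patch g t1 h d1) t2 h d2 t <= f t + g t.
Proof.
  intros H12 Hw1 Hw2 t.
  destruct (Rlt_le_dec t t1); [rewrite !patch_out by lra; lra|].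
  destruct (Rlt_le_dec t (t1 + h)).
  { rewrite !(patch_out _ t2), !patch_in by lra. apply Hw1; lra. }
  destruct (Rlt_le_dec t t2); [rewrite !patch_out by lra; lra|].
  destruct (Rlt_le_dec t (t2 + h)); [rewrite !patch_in by lra; apply Hw2; lra|].
  rewrite !patch_out by lra. lra.
Qed.

(** * The profitable exchange *)

(* [q / p] lies strictly between [Bb / B2] and [A / A2], and [eps] is small enough for
   the first-order errors not to cancel the gains. *)
Lemma rate_gap_weights (A Bb A2 B2 : R) :
  0 < A -> 0 < Bb -> 0 < A2 -> 0 < B2 -> A2 * Bb < A * B2 ->
  exists p q eps, 0 < p /\ 0 < q /\ 0 < eps /\
    0 < A * p - A2 * (4 * eps + q) - eps * (6 * eps + p + q) /\
    0 < B2 * q - Bb * (4 * eps + p) - eps * (6 * eps + p + q).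
Proof.
  intros HA HBb HA2 HB2 Hrate.
  set (D := A * B2 - A2 * Bb).
  exists (2 * A2 * B2), (A * B2 + A2 * Bb).
  set (p := 2 * A2 * B2). set (q := A * B2 + A2 * Bb).
  assert (Hp : 0 < p) by (unfold p; nra). assert (Hq : 0 < q) by (unfold q; nra).
  assert (Hpq_i : A * p - A2 * q = A2 * D) by (unfold p, q, D; ring).
  assert (Hpq_j : B2 * q - Bb * p = B2 * D) by (unfold p, q, D; ring).
  set (m := Rmin (A2 * D) (B2 * D)).
  assert (Hm : 0 < m) by (apply Rmin_glb_lt; unfold D; nra).
  assert (Hm_i : m <= A2 * D) by apply Rmin_l. assert (Hm_j : m <= B2 * D) by apply Rmin_r.
  set (K := 4 * (A2 + Bb) + p + q + 6 + m).
  exists (m / (2 * K)). set (eps := m / (2 * K)).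
  assert (Heps : 0 < eps) by (unfold eps, K; apply Rdiv_lt_0_compat; lra).
  assert (HepsK : eps * K = m / 2) by (unfold eps, K; field; lra).
  assert (Heps1 : eps < 1) by (unfold K in HepsK; nra).
  assert (Hslack : eps * (4 * (A2 + Bb) + 6 * eps + p + q) <= m / 2).
  { rewrite <- HepsK. apply Rmult_le_compat_l; unfold K; lra. }
  repeat split; try assumption; nra.
Qed.

Section Speedup.

Variables (B : R) (s ds : R -> R).
Hypothesis hs : speedup_ok B s ds.

Lemma speedup_mono (a b : R) : 0 <= a -> a <= b -> b <= B -> s a <= s b.
Proof.
  intros Ha Hab HbB. destruct hs as [_ [Hinc _]].
  destruct (Req_dec a b) as [->|Hne]; [lra|]. left. apply Hinc; lra.
Qed.

Lemma speedup_first_order (a g : R) : 0 <= a <= B -> 0 < g ->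
  exists r, 0 < r /\ forall k, 0 <= a + k <= B -> Rabs k < r ->
    ds a * k - g * Rabs k <= s (a + k) - s a <= ds a * k + g * Rabs k.
Proof.
  intros Ha Hg. destruct hs as [_ [_ [_ [Hder _]]]].
  destruct (proj1 (filterlim_locally _ _) (Hder a Ha) (mkposreal g Hg)) as [r Hr].
  exists r. split; [apply cond_pos|]. intros k Hk Hkr.
  apply Rabs_le_between'.
  destruct (Req_dec k 0) as [->|Hne].
  - rewrite Rplus_0_r, Rabs_R0. replace (s a - s a - ds a * 0) with 0 by ring.
    rewrite Rabs_R0. lra.
  - assert (Hq : Rabs ((s (a + k) - s a) / (a + k - a) - ds a) < g).
    { apply (Hr (a + k)); [|split; [exact Hk|lra]].
      apply Rabs_lt_between'. apply Rabs_lt_between in Hkr. simpl in *. lra. }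
    replace (a + k - a) with k in Hq by ring.
    replace (s (a + k) - s a - ds a * k) with (((s (a + k) - s a) / k - ds a) * k)
      by (field; lra).
    rewrite Rabs_mult. apply Rmult_le_compat_r; [apply Rabs_pos|lra].
Qed.

Lemma exchange_gain_first_order (a a2 g : R) : 0 <= a <= B -> 0 <= a2 <= B -> 0 < g ->
  exists r, 0 < r /\ forall d u v, 0 <= d -> 0 <= u -> 0 <= v -> 4 * d + u + v < r ->
    a + d + u <= B -> 3 * d + v <= a2 -> a2 + d <= B ->
    ds a * u - ds a2 * (4 * d + v) - g * (6 * d + u + v) <=
    s (a + d + u) - s (a + d) + s (a2 - 3 * d - v) - s (a2 + d).
Proof.
  intros Ha Ha2 Hg.
  destruct (speedup_first_order a g Ha Hg) as [ra [Hra Fa]].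
  destruct (speedup_first_order a2 g Ha2 Hg) as [ra2 [Hra2 Fa2]].
  exists (Rmin ra ra2). split; [apply Rmin_glb_lt; assumption|].
  intros d u v Hd Hu Hv Hr Hau Hav Had.
  pose proof (Rmin_l ra ra2). pose proof (Rmin_r ra ra2).
  destruct (Fa (d + u)) as [F1 _]; [lra|rewrite Rabs_pos_eq; lra|].
  destruct (Fa d) as [_ F2]; [lra|rewrite Rabs_pos_eq; lra|].
  destruct (Fa2 (- (3 * d + v))) as [F3 _]; [lra|rewrite Rabs_Ropp, Rabs_pos_eq; lra|].
  destruct (Fa2 d) as [_ F4]; [lra|rewrite Rabs_pos_eq; lra|].
  rewrite Rabs_Ropp in F3. rewrite !Rabs_pos_eq in F1, F2, F3, F4 by lra.
  replace (a + (d + u)) with (a + d + u) in F1 by ring.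
  replace (a2 + - (3 * d + v)) with (a2 - 3 * d - v) in F3 by ring.
  lra.
Qed.

(* On the windows the allocations are only known up to [d]: raising one job to
   [level + d + move] and lowering the other to [level - 3 d - move] keeps the pair within
   its old total.  The moves and the slack are multiples [p e], [q e], [eps e] of one small
   [e], with the weights of [rate_gap_weights]. *)
Lemma profitable_exchange (a b a2 b2 : R) :
  0 < a -> 0 < b -> 0 < a2 -> 0 < b2 -> a + b <= B -> a2 + b2 <= B ->
  ds a2 * ds b < ds a * ds b2 ->
  exists u v d, 0 < u /\ 0 < v /\ 0 < d /\
    3 * d + u <= b /\ 3 * d + v <= a2 /\ d <= a /\ d <= b2 /\
    0 < s (a + d + u) - s (a + d) + s (a2 - 3 * d - v) - s (a2 + d) /\
    0 < s (b2 + d + v) - s (b2 + d) + s (b - 3 * d - u) - s (b + d).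
Proof.
  intros Ha Hb Ha2 Hb2 Hab Hab2 Hrate.
  assert (Hpos := proj2 (proj2 (proj2 (proj2 (proj2 hs))))).
  destruct (rate_gap_weights (ds a) (ds b) (ds a2) (ds b2))
    as [p [q [eps [Hp [Hq [Heps [Wi Wj]]]]]]]; try (apply Hpos; lra); [exact Hrate|].
  destruct (exchange_gain_first_order a a2 eps) as [ri [Hri Gi]]; [lra|lra|exact Heps|].
  destruct (exchange_gain_first_order b2 b eps) as [rj [Hrj Gj]]; [lra|lra|exact Heps|].
  set (C := 4 * eps + p + q).
  assert (HC : 0 < C) by (unfold C; lra).
  destruct (filter_ex (F := at_right 0) _
    (filter_and (F := at_right 0) _ _ (at_right_0_mul_lt C ri HC Hri)
    (filter_and (F := at_right 0) _ _ (at_right_0_mul_lt C rj HC Hrj)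
    (filter_and (F := at_right 0) _ _ (at_right_0_mul_lt C a HC Ha)
    (filter_and (F := at_right 0) _ _ (at_right_0_mul_lt C b HC Hb)
    (filter_and (F := at_right 0) _ _ (at_right_0_mul_lt C a2 HC Ha2)
                                      (at_right_0_mul_lt C b2 HC Hb2)))))))
    as [e [[He Ei] [[_ Ej] [[_ Ea] [[_ Eb] [[_ Ea2] [_ Eb2]]]]]]].
  assert (Hsize : 4 * (eps * e) + p * e + q * e = C * e) by (unfold C; ring).
  exists (p * e), (q * e), (eps * e).
  assert (0 < p * e) by nra. assert (0 < q * e) by nra. assert (0 < eps * e) by nra.
  do 7 (split; [lra|]). split.
  - eapply Rlt_le_trans; [apply (Rmult_lt_0_compat e _ He Wi)|].
    eapply Rle_trans; [|apply Gi; lra]. right. ring.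
  - eapply Rlt_le_trans; [apply (Rmult_lt_0_compat e _ He Wj)|].
    eapply Rle_trans; [|apply Gj; lra]. right. ring.
Qed.

End Speedup.

Definition allocation (M : nat) (B : R) (th : nat -> R -> R) : Prop :=
  (forall i t, (i < M)%nat -> 0 < t -> 0 <= th i t <= B) /\
  (forall i t, (i < M)%nat -> 0 < t -> filterlim (th i) (at_right t) (locally (th i t))) /\
  (forall t, 0 < t -> rsum M (fun i => th i t) <= B).

Lemma feasible_allocation (M : nat) (B : R) (s : R -> R) (x : nat -> R)
    (th : nat -> R -> R) (T : nat -> R) :
  feasible M B s x th T -> allocation M B th.
Proof. intros [H1 [H2 [H3 _]]]. exact (conj H1 (conj H2 H3)). Qed.

Definition truncate (th : nat -> R -> R) (T : nat -> R) (k : nat) (t : R) : R :=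
  if Rlt_dec t (T k) then th k t else 0.

Lemma allocation_truncate (M : nat) (B : R) (th : nat -> R -> R) (T : nat -> R) :
  allocation M B th -> allocation M B (truncate th T).
Proof.
  intros [Hbd [Hrc Hsum]]. split; [|split].
  - intros k t Hk Ht. pose proof (Hbd k t Hk Ht). unfold truncate.
    destruct (Rlt_dec t (T k)); lra.
  - intros k t Hk Ht. destruct (Rlt_le_dec t (T k)).
    + apply right_continuous_ext with (th k) (T k - t); [lra| |auto].
      intros y Hy. unfold truncate. destruct (Rlt_dec y (T k)); [reflexivity|lra].
    + apply right_continuous_ext with (fun _ => 0) 1; [lra| |apply filterlim_const].
      intros y Hy. unfold truncate. destruct (Rlt_dec y (T k)); [lra|reflexivity].
  - intros t Ht. eapply Rle_trans; [|apply (Hsum t Ht)]. apply rsum_le.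
    intros k Hk. unfold truncate. destruct (Rlt_dec t (T k)); [lra|]. apply Hbd; auto.
Qed.

(* Each job is stopped at the first time its service reaches [x k]. *)
Lemma oversupply_improvable (M : nat) (B : R) (s : R -> R) (x w : nat -> R)
    (th : nat -> R -> R) (T : nat -> R) (k0 : nat) :
  (forall k, (k < M)%nat -> 0 < x k) -> (forall k, (k < M)%nat -> 0 < w k) ->
  allocation M B th ->
  (forall k, (k < M)%nat -> 0 <= T k /\ ex_RInt (fun t => s (th k t)) 0 (T k) /\
       x k <= RInt (fun t => s (th k t)) 0 (T k) /\ (forall t, T k < t -> th k t = 0)) ->
  (k0 < M)%nat -> x k0 < RInt (fun t => s (th k0 t)) 0 (T k0) ->
  exists th' T', feasible M B s x th' T' /\ cost M w T' < cost M w T.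
Proof.
  intros Hx Hw Halloc Hserve Hk0 Hover.
  assert (Hhit : forall k, exists T', (k < M)%nat -> 0 <= T' <= T k /\
     is_RInt (fun t => s (th k t)) 0 T' (x k) /\
     (x k < RInt (fun t => s (th k t)) 0 (T k) -> T' < T k)).
  { intros k. destruct (Compare_dec.lt_dec k M) as [Hk|Hk]; [|exists 0; lia].
    destruct (Hserve k Hk) as [HT [Hex [Hxk _]]]. specialize (Hx k Hk).
    destruct (RInt_intermediate_value _ (T k) (x k) HT Hex ltac:(lra)) as [T' HT'].
    exists T'. auto. }
  destruct (functional_choice _ Hhit) as [T' HT'].
  exists (truncate th T'), T'. split.
  - destruct (allocation_truncate M B th T' Halloc) as [H1 [H2 H3]].
    split; [exact H1|split; [exact H2|split; [exact H3|]]].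
    intros k Hk. destruct (HT' k Hk) as [HT'k [Hint _]]. split; [lra|split].
    + apply is_RInt_ext with (fun t => s (th k t)); [|exact Hint].
      rewrite Rmin_left, Rmax_right by lra. intros y Hy. unfold truncate.
      destruct (Rlt_dec y (T' k)); [reflexivity|lra].
    + intros t Ht. unfold truncate. destruct (Rlt_dec t (T' k)); [lra|reflexivity].
  - unfold cost. apply rsum_lt with k0; [|exact Hk0|].
    + intros k Hk. destruct (HT' k Hk) as [HT'k _]. pose proof (Hw k Hk). nra.
    + destruct (HT' k0 Hk0) as [_ [_ Hlt]]. specialize (Hlt Hover).
      pose proof (Hw k0 Hk0). nra.
Qed.

Definition exchange (th : nat -> R -> R) (i j : nat) (fi fj : R -> R) (k : nat) : R -> R :=
  if Nat.eq_dec k i then fi else if Nat.eq_dec k j then fj else th k.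

Lemma exchange_i (th : nat -> R -> R) (i j : nat) (fi fj : R -> R) :
  exchange th i j fi fj i = fi.
Proof. unfold exchange. destruct (Nat.eq_dec i i); [reflexivity|lia]. Qed.

Lemma exchange_j (th : nat -> R -> R) (i j : nat) (fi fj : R -> R) :
  i <> j -> exchange th i j fi fj j = fj.
Proof.
  intros Hij. unfold exchange. destruct (Nat.eq_dec j i); [lia|].
  destruct (Nat.eq_dec j j); [reflexivity|lia].
Qed.

Lemma exchange_other (th : nat -> R -> R) (i j : nat) (fi fj : R -> R) (k : nat) :
  k <> i -> k <> j -> exchange th i j fi fj k = th k.
Proof.
  intros Hki Hkj. unfold exchange. destruct (Nat.eq_dec k i); [lia|].
  destruct (Nat.eq_dec k j); [lia|reflexivity].
Qed.

Lemma allocation_exchange (M : nat) (B : R) (th : nat -> R -> R) (i j : nat) (fi fj : R -> R) :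
  allocation M B th -> i <> j -> (i < M)%nat -> (j < M)%nat ->
  (forall t, 0 < t -> 0 <= fi t <= B /\ 0 <= fj t <= B) ->
  (forall t, 0 < t -> filterlim fi (at_right t) (locally (fi t))) ->
  (forall t, 0 < t -> filterlim fj (at_right t) (locally (fj t))) ->
  (forall t, 0 < t -> fi t + fj t <= th i t + th j t) ->
  allocation M B (exchange th i j fi fj).
Proof.
  intros [Hbd [Hrc Hsum]] Hij Hi Hj Hfbd Hfi Hfj Hfsum. split; [|split].
  - intros k t Hk Ht.
    destruct (Nat.eq_dec k i) as [->|Hki]; [rewrite exchange_i; apply Hfbd; auto|].
    destruct (Nat.eq_dec k j) as [->|Hkj]; [rewrite exchange_j by auto; apply Hfbd; auto|].
    rewrite exchange_other by auto. auto.
  - intros k t Hk Ht. destruct (Nat.eq_dec k i) as [->|Hki]; [rewrite exchange_i; auto|].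
    destruct (Nat.eq_dec k j) as [->|Hkj]; [rewrite exchange_j by auto; auto|].
    rewrite exchange_other by auto. auto.
  - intros t Ht. eapply Rle_trans; [|apply (Hsum t Ht)].
    assert (E : rsum M (fun k => exchange th i j fi fj k t) - rsum M (fun k => th k t) =
                (fi t - th i t) + (fj t - th j t)).
    { rewrite (rsum_sub_pair M _ _ i j Hij Hi Hj).
      - rewrite exchange_i, exchange_j by auto. reflexivity.
      - intros k Hki Hkj. rewrite exchange_other by auto. reflexivity. }
    specialize (Hfsum t Ht). lra.
Qed.

Lemma allocation_pair_le (M : nat) (B : R) (th : nat -> R -> R) (i j : nat) (t : R) :
  allocation M B th -> i <> j -> (i < M)%nat -> (j < M)%nat -> 0 < t ->
  th i t + th j t <= B.
Proof.
  intros [Hbd [_ Hsum]] Hij Hi Hj Ht. eapply Rle_trans; [|apply (Hsum t Ht)].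
  apply (rsum_ge_pair M (fun k => th k t) i j Hij Hi Hj). intros k Hk. apply Hbd; auto.
Qed.

Definition oversupplies (B : R) (s : R -> R) (xk Tk : R) (f : R -> R) : Prop :=
  (forall t, 0 < t -> 0 <= f t <= B) /\
  (forall t, 0 < t -> filterlim f (at_right t) (locally (f t))) /\
  (forall t, Tk < t -> f t = 0) /\
  ex_RInt (fun t => s (f t)) 0 Tk /\ xk < RInt (fun t => s (f t)) 0 Tk.

Lemma exchange_cheaper (M : nat) (B : R) (s : R -> R) (x w : nat -> R)
    (th : nat -> R -> R) (T : nat -> R) (i j : nat) (fi fj : R -> R) :
  (forall k, (k < M)%nat -> 0 < x k) -> (forall k, (k < M)%nat -> 0 < w k) ->
  feasible M B s x th T -> i <> j -> (i < M)%nat -> (j < M)%nat ->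
  oversupplies B s (x i) (T i) fi -> oversupplies B s (x j) (T j) fj ->
  (forall t, 0 < t -> fi t + fj t <= th i t + th j t) ->
  exists th' T', feasible M B s x th' T' /\ cost M w T' < cost M w T.
Proof.
  intros Hx Hw Hfeas Hij Hi Hj [Bi [Ri [Zi [Ei Oi]]]] [Bj [Rj [Zj [Ej Oj]]]] Hsum.
  pose proof Hfeas as [_ [_ [_ Hcompl]]].
  assert (Halloc : allocation M B (exchange th i j fi fj)).
  { apply allocation_exchange; auto. apply (feasible_allocation _ _ _ _ _ _ Hfeas). }
  apply (oversupply_improvable M B s x w _ T i Hx Hw Halloc); [|exact Hi|].
  - intros k Hk. destruct (Hcompl k Hk) as [HT [HI HZ]].
    destruct (Nat.eq_dec k i) as [->|Hki]; [rewrite exchange_i; repeat split; auto; lra|].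
    destruct (Nat.eq_dec k j) as [->|Hkj].
    { rewrite exchange_j by exact Hij. repeat split; auto; lra. }
    rewrite exchange_other by assumption.
    repeat split; [exact HT|exists (x k); exact HI| |exact HZ].
    rewrite (is_RInt_unique _ _ _ _ HI). lra.
  - rewrite exchange_i. exact Oi.
Qed.

Lemma patch2_oversupplies (B : R) (s f : R -> R) (xk Tk t1 t2 h c1 c2 p1 p2 : R) :
  (forall a b, 0 <= a -> a <= b -> b <= B -> s a <= s b) ->
  (forall t, 0 < t -> 0 <= f t <= B) ->
  (forall t, 0 < t -> filterlim f (at_right t) (locally (f t))) ->
  (forall t, Tk < t -> f t = 0) -> is_RInt (fun t => s (f t)) 0 Tk xk ->
  0 < t1 -> 0 < h -> t1 + h <= t2 -> t2 + h <= Tk ->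
  0 <= c1 <= B -> 0 <= c2 <= B -> p1 <= B -> p2 <= B ->
  (forall t, t1 <= t < t1 + h -> f t <= p1) -> (forall t, t2 <= t < t2 + h -> f t <= p2) ->
  0 < s c1 - s p1 + s c2 - s p2 ->
  oversupplies B s xk Tk (patch (patch f t1 h c1) t2 h c2).
Proof.
  intros Hmono Hbd Hrc Hzero Hint Ht1 Hh H12 HT Hc1 Hc2 Hp1 Hp2 Hw1 Hw2 Hgain.
  destruct (RInt_patch2_ge B s f t1 t2 h c1 c2 p1 p2 Tk Hmono Ht1 Hh H12 HT
              (ex_intro _ _ Hint)) as [Hex Hge]; [| exact Hp1 | | exact Hp2 |].
  1, 2: intros t Ht; split; [apply Hbd; lra|]; (apply Hw1 || apply Hw2); lra.
  rewrite (is_RInt_unique _ _ _ _ Hint) in Hge.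
  split; [|split; [|split; [|split]]].
  - intros t Ht. apply patch2_preserves with (P := fun y => 0 <= y <= B); auto.
  - apply patch_right_continuous; [exact Hh|]. apply patch_right_continuous; auto.
  - intros t Ht. rewrite !patch_out by lra. auto.
  - exact Hex.
  - assert (0 < h * (s c1 - s p1 + s c2 - s p2)) by (apply Rmult_lt_0_compat; lra). lra.
Qed.

Section Optimal.

Variables (M : nat) (B : R) (s ds : R -> R) (x w : nat -> R).
Hypothesis hs : speedup_ok B s ds.
Hypothesis hx : forall i, (i < M)%nat -> 0 < x i.
Hypothesis hw : forall i, (i < M)%nat -> 0 < w i.
Variables (th : nat -> R -> R) (T : nat -> R).
Hypothesis hopt : optimal M B s x w th T.

Lemma optimal_rate_cross_le_ordered (i j : nat) (t1 t2 : R) :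
  i <> j -> (i < M)%nat -> (j < M)%nat -> 0 < t1 -> t1 < t2 ->
  0 < th i t1 -> 0 < th j t1 -> 0 < th i t2 -> 0 < th j t2 ->
  ds (th i t1) * ds (th j t2) <= ds (th i t2) * ds (th j t1).
Proof.
  intros Hij Hi Hj Ht1 H12 Pa Pb Pa2 Pb2. apply Rnot_lt_le. intros Hrate.
  destruct hopt as [Hfeas Hmin].
  pose proof (feasible_allocation _ _ _ _ _ _ Hfeas) as Halloc.
  pose proof Halloc as [Hbd [Hrc _]].
  pose proof Hfeas as [_ [_ [_ Hcompl]]].
  destruct (Hcompl i Hi) as [_ [HIi HZi]]. destruct (Hcompl j Hj) as [_ [HIj HZj]].
  assert (Ht2 : 0 < t2) by lra.
  pose proof (right_continuous_pos_lt (th i) t2 (T i) Pa2 (Hrc i t2 Hi Ht2) HZi).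
  pose proof (right_continuous_pos_lt (th j) t2 (T j) Pb2 (Hrc j t2 Hj Ht2) HZj).
  pose proof (allocation_pair_le M B th i j t1 Halloc Hij Hi Hj Ht1) as Hab.
  pose proof (allocation_pair_le M B th i j t2 Halloc Hij Hi Hj Ht2) as Hab2.
  destruct (profitable_exchange B s ds hs _ _ _ _ Pa Pb Pa2 Pb2 Hab Hab2 Hrate)
    as [u [v [d [Hu [Hv [Hd [Hb3 [Ha3 [Hda [Hdb2 [Gain_i Gain_j]]]]]]]]]]].
  destruct (filter_ex (F := at_right 0) _
    (filter_and (F := at_right 0) _ _ (at_right_0_le ((t2 - t1) / 2) ltac:(lra))
    (filter_and (F := at_right 0) _ _ (at_right_0_le (T i - t2) ltac:(lra))
    (filter_and (F := at_right 0) _ _ (at_right_0_le (T j - t2) ltac:(lra))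
    (filter_and (F := at_right 0) _ _ (right_continuous_eventually _ _ _ (Hrc i t1 Hi Ht1) Hd)
    (filter_and (F := at_right 0) _ _ (right_continuous_eventually _ _ _ (Hrc j t1 Hj Ht1) Hd)
    (filter_and (F := at_right 0) _ _ (right_continuous_eventually _ _ _ (Hrc i t2 Hi Ht2) Hd)
                    (right_continuous_eventually _ _ _ (Hrc j t2 Hj Ht2) Hd))))))))
    as [h [[Hh Hh12] [[_ HhTi] [[_ HhTj] [Ni1 [Nj1 [Ni2 Nj2]]]]]]].
  pose proof (speedup_mono B s ds hs) as Hmono.
  destruct (exchange_cheaper M B s x w th T i j
    (patch (patch (th i) t1 h (th i t1 + d + u)) t2 h (th i t2 - 3 * d - v))
    (patch (patch (th j) t1 h (th j t1 - 3 * d - u)) t2 h (th j t2 + d + v))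
    hx hw Hfeas Hij Hi Hj) as [th' [T' [Hfeas' Hcost]]].
  - apply (patch2_oversupplies B s (th i) _ _ t1 t2 h _ _ (th i t1 + d) (th i t2 + d));
      auto; try lra; intros y Hy; [pose proof (Ni1 y Hy) | pose proof (Ni2 y Hy)]; lra.
  - apply (patch2_oversupplies B s (th j) _ _ t1 t2 h _ _ (th j t1 + d) (th j t2 + d));
      auto; try lra; intros y Hy; [pose proof (Nj1 y Hy) | pose proof (Nj2 y Hy)]; lra.
  - intros t Ht. apply patch2_sum_le; [lra| |]; intros y Hy;
      [pose proof (Ni1 y Hy); pose proof (Nj1 y Hy) | pose proof (Ni2 y Hy); pose proof (Nj2 y Hy)];
      lra.
  - specialize (Hmin th' T' Hfeas'). lra.
Qed.

Lemma optimal_rate_cross_eq (i j : nat) (t1 t2 : R) :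
  (i < M)%nat -> (j < M)%nat -> 0 < t1 -> 0 < t2 ->
  0 < th i t1 -> 0 < th j t1 -> 0 < th i t2 -> 0 < th j t2 ->
  ds (th i t1) * ds (th j t2) = ds (th i t2) * ds (th j t1).
Proof.
  intros Hi Hj Ht1 Ht2 Pa Pb Pa2 Pb2.
  destruct (Nat.eq_dec i j) as [<-|Hij]; [ring|].
  destruct (Rtotal_order t1 t2) as [H12|[<-|H21]]; [| ring |].
  - apply Rle_antisym; [apply optimal_rate_cross_le_ordered; auto|].
    rewrite (Rmult_comm (ds (th i t1))), (Rmult_comm (ds (th i t2))).
    apply optimal_rate_cross_le_ordered; auto.
  - symmetry. apply Rle_antisym; [apply optimal_rate_cross_le_ordered; auto|].
    rewrite (Rmult_comm (ds (th i t2))), (Rmult_comm (ds (th i t1))).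
    apply optimal_rate_cross_le_ordered; auto.
Qed.

End Optimal.

Theorem theorem1 (M : nat) (B : R) (s ds : R -> R) (x w : nat -> R)
    (hB : 0 < B) (hs : speedup_ok B s ds)
    (hx : forall i, (i < M)%nat -> 0 < x i)
    (hxdec : forall i j, (i <= j)%nat -> (j < M)%nat -> x j <= x i)
    (hw : forall i, (i < M)%nat -> 0 < w i)
    (hwinc : forall i j, (i <= j)%nat -> (j < M)%nat -> w i <= w j)
    (th : nat -> R -> R) (T : nat -> R)
    (hopt : optimal M B s x w th T) :
  forall i j, (i < M)%nat -> (j < M)%nat ->
    exists c : R, forall t, 0 < t -> 0 < th i t -> 0 < th j t ->
      ds (th i t) / ds (th j t) = c.
Proof.
  intros i j Hi Hj.
  destruct (classic (exists t0, 0 < t0 /\ 0 < th i t0 /\ 0 < th j t0))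
    as [[t0 [Ht0 [Pi0 Pj0]]]|Hnone].
  - exists (ds (th i t0) / ds (th j t0)). intros t Ht Pi Pj.
    pose proof hopt as [[Hbd _] _].
    assert (Hpos := proj2 (proj2 (proj2 (proj2 (proj2 hs))))).
    assert (0 < ds (th j t)) by (apply Hpos; pose proof (Hbd j t Hj Ht); lra).
    assert (0 < ds (th j t0)) by (apply Hpos; pose proof (Hbd j t0 Hj Ht0); lra).
    assert (E := optimal_rate_cross_eq M B s ds x w hs hx hw th T hopt i j t t0
                   Hi Hj Ht Ht0 Pi Pj Pi0 Pj0).
    field_simplify_eq; lra.
  - exists 0. intros t Ht Pi Pj. exfalso. apply Hnone. exists t. auto.
Qed.
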